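(* Let $S=\{s_1<\dots<s_{k_1}\}$ and $T=\{t_1<\dots<t_{k_2}\}$ be nonempty subsets of $\{1,\dots,n-1\}$ with $\max S+\min T\le n$ and $\min S+\max T\le n$, and let $D$ be the digraph of $T_n\langle S;T\rangle$. Let $v$ be a vertex of $D$ and let $a_2,\dots,a_{k_1},b_2,\dots,b_{k_2}$ be nonnegative integers. Then: (a) there is a directed walk $W$ in $D$ starting from $v$, of length $\ell$, containing exactly $a_i$ $s_i$-arcs and exactly $b_j$ $t_j$-arcs for each $2\le i\le k_1$ and $2\le j\le k_2$, where $$\ell\le\Big(\sum_{i=2}^{k_1}a_i+\sum_{j=2}^{k_2}b_j\Big)\Big(\max\Big\{\Big\lceil\tfrac{t_{k_2}}{s_1}\Big\rceil,\Big\lceil\tfrac{s_{k_1}}{t_1}\Big\rceil\Big\}+1\Big);$$ (b) for such a walk $W$, let $a_1$ and $b_1$ be the numbers of $s_1$-arcs and $t_1$-arcs in $W$. If integers $a\ge a_1$ and $b\ge b_1$ satisfy $$1\le v+as_1+\sum_{i=2}^{k_1}a_is_i-bt_1-\sum_{j=2}^{k_2}b_jt_j\le n,$$ then there is a directed walk in $D$ starting from $v$ containing exactly $a$ $s_1$-arcs, exactly $b$ $t_1$-arcs, and exactly $a_i$ $s_i$-arcs and $b_j$ $t_j$-arcs for all $2\le i\le k_1$, $2\le j\le k_2$.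
   Context: $T_n\langle S;T\rangle$ is the $n\times n$ $(0,1)$-matrix whose $(i,j)$-entry is $1$ iff $j-i\in S$ or $i-j\in T$; its digraph $D$ has vertex set $[n]$ and arc $(i,j)$ iff that entry is $1$. An arc $u\to v$ of $D$ is an $s_i$-arc if $v-u=s_i$, and a $t_j$-arc if $u-v=t_j$. *)

From mathcomp Require Import all_boot all_order all_algebra.
Set Implicit Arguments. Unset Strict Implicit. Unset Printing Implicit Defensive.

(* S and T are given as strictly increasing sequences
   S = [:: s_1; ...; s_k1] (so s_i = nth 0 S (i-1), 0-based in Rocq). *)
Definition Darc (n : nat) (S T : seq nat) (x y : nat) : bool :=
  [&& 1 <= x <= n, 1 <= y <= n &
      ((x < y) && (y - x \in S)) || ((y < x) && (x - y \in T))].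

(* A directed walk from v is the list w of vertices visited after v;
   its length is size w. *)
Definition is_walk (n : nat) (S T : seq nat) (v : nat) (w : seq nat) : bool :=
  (1 <= v <= n) && path (Darc n S T) v w.

Definition num_sarcs (s v : nat) (w : seq nat) : nat :=
  count (fun p : nat * nat => p.2 == p.1 + s) (zip (v :: w) w).

Definition num_tarcs (t v : nat) (w : seq nat) : nat :=
  count (fun p : nat * nat => p.1 == p.2 + t) (zip (v :: w) w).

Definition ceildiv (m d : nat) : nat := (m + d.-1) %/ d.

From mathcomp Require Import all_boot all_order all_algebra zify.
Import GRing.Theory Num.Theory.

Set Implicit Arguments.
Unset Strict Implicit.
Unset Printing Implicit Defensive.

(* Walks built from s1-arcs and t1-arcs alone realise any net displacement
   p s1 - q t1 whose endpoint lies in [1, n]: since s1 + t1 <= n, whenever an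
   s1-step leaves [1, n] a t1-step does not, so steps can be taken greedily.
   Part (b) appends such a walk to W, the displacement still needed being read
   off from the arc counts of W.  For part (a), each prescribed s_i-arc is
   preceded by at most ceil(s_k1 / t1) t1-arcs that bring the walk low enough
   for the s_i-arc to fit, and symmetrically for each prescribed t_j-arc. *)

Lemma ceildivP m d : 0 < d -> m <= ceildiv m d * d < m + d.
Proof.
case: d => // d _; rewrite /ceildiv /=.
have := divn_eq (m + d) d.+1; have := ltn_pmod (m + d) (ltn0Sn d); lia.
Qed.

Lemma leq_ceildiv d m m' : m <= m' -> ceildiv m d <= ceildiv m' d.
Proof. by move=> le_mm'; rewrite leq_div2r // leq_add2r. Qed.

Lemma descent_steps c d x m : 0 < c -> 1 <= x <= m -> d + c <= m ->
  exists q, [/\ q <= ceildiv d c, q * c < x & x - q * c + d <= m].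
Proof.
move=> c_gt0 x_in dc_le; case: (leqP (x + d) m) => xd; first by exists 0; split; lia.
exists (ceildiv (x + d - m) c); split; first by apply: leq_ceildiv; lia.
all: have := ceildivP (x + d - m) c_gt0; lia.
Qed.

Lemma ascent_steps c d x m : 0 < c -> 1 <= x <= m -> d + c <= m ->
  exists p, [/\ p <= ceildiv d c, d < x + p * c & x + p * c <= m].
Proof.
move=> c_gt0 x_in dc_le; case: (ltnP d x) => dx; first by exists 0; split; lia.
exists (ceildiv (d.+1 - x) c); split; first by apply: leq_ceildiv; lia.
all: have := ceildivP (d.+1 - x) c_gt0; lia.
Qed.

Lemma sum_uniq_indicator (s : seq nat) d :
  uniq s -> \sum_(i <- s) (d == i) * i = (d \in s) * d.
Proof.
elim: s => [|x s IH] /=; first by rewrite big_nil.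
case/andP=> xs us; rewrite big_cons IH // inE.
by case: eqP => [->|_]; rewrite ?(negbTE xs) ?mul0n ?muln0 ?addn0.
Qed.

Lemma big_nat_decr m k (a : nat -> nat) j : m <= j < k -> 0 < a j ->
  \sum_(m <= i < k) a i = (\sum_(m <= i < k) (a i - (i == j))).+1.
Proof.
move=> jr aj; rewrite !(bigD1_seq j) ?mem_index_iota ?iota_uniq //=.
rewrite eqxx subn1 -addSn prednK //.
by congr (_ + _); apply: eq_bigr => i /negbTE ->; rewrite subn0.
Qed.

Lemma sum_seq_nth0 (F : nat -> nat) (s : seq nat) : 0 < size s ->
  \sum_(x <- s) F x = F (nth 0 s 0) + \sum_(1 <= i < size s) F (nth 0 s i).
Proof. by move=> s_gt0; rewrite (big_nth 0) big_ltn. Qed.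

Lemma sorted_ltn_le_last (s : seq nat) : sorted ltn s ->
  {in s, forall x, x <= nth 0 s (size s).-1}.
Proof.
move=> ss x /(nthP 0) [i i_lt <-].
(* Restate [i_lt] at type [nat]: [nthP] produces [size] at an [eqType] sort that [lia]
   would treat as a different atom. *)
have {}i_lt : i < size s := i_lt.
apply: (sorted_leq_nth leq_trans leqnn 0 (sub_sorted (fun x y => @ltnW x y) ss)).
all: rewrite ?inE /=; lia.
Qed.

Lemma sorted_ltn_room (s : seq nat) m n : sorted ltn s ->
  nth 0 s (size s).-1 + m <= n -> {in s, forall x, x + m <= n}.
Proof.
by move=> ss room x /(sorted_ltn_le_last ss) le_x; apply: leq_trans room; rewrite leq_add2r.
Qed.

Lemma sorted_ltn_ceildiv (s : seq nat) d K : sorted ltn s ->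
  ceildiv (nth 0 s (size s).-1) d <= K -> {in s, forall x, ceildiv x d <= K}.
Proof. by move=> ss le_K x /(sorted_ltn_le_last ss) /(leq_ceildiv d) /leq_trans; apply. Qed.


Lemma nth_uniq_neq0 (x : seq nat) i : uniq x -> 1 <= i < size x -> nth 0 x i != nth 0 x 0.
Proof.
move=> ux /andP[i_gt0 i_lt]; rewrite nth_uniq // -?lt0n //.
exact: leq_ltn_trans (leq0n i) i_lt.
Qed.

Definition only_arcs (s t v : nat) (w : seq nat) : bool :=
  all (fun p : nat * nat => (p.2 == p.1 + s) || (p.1 == p.2 + t)) (zip (v :: w) w).

Lemma num_sarcs_cons s v x w :
  num_sarcs s v (x :: w) = (x == v + s) + num_sarcs s x w.
Proof. by []. Qed.

Lemma num_tarcs_cons t v x w :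
  num_tarcs t v (x :: w) = (v == x + t) + num_tarcs t x w.
Proof. by []. Qed.

Lemma only_arcs_cons s t v x w :
  only_arcs s t v (x :: w) = ((x == v + s) || (v == x + t)) && only_arcs s t x w.
Proof. by []. Qed.

Lemma zip_walk_cat (A : Type) (v : A) w1 w2 :
  zip (v :: w1 ++ w2) (w1 ++ w2) = zip (v :: w1) w1 ++ zip (last v w1 :: w2) w2.
Proof. by elim: w1 v => [|x w1 IH] v //=; rewrite IH. Qed.

Lemma num_sarcs_cat s v w1 w2 :
  num_sarcs s v (w1 ++ w2) = num_sarcs s v w1 + num_sarcs s (last v w1) w2.
Proof. by rewrite /num_sarcs zip_walk_cat count_cat. Qed.

Lemma num_tarcs_cat t v w1 w2 :
  num_tarcs t v (w1 ++ w2) = num_tarcs t v w1 + num_tarcs t (last v w1) w2.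
Proof. by rewrite /num_tarcs zip_walk_cat count_cat. Qed.

Lemma num_sarcs_only s t v w s' :
  0 < t -> only_arcs s t v w -> s' != s -> num_sarcs s' v w = 0.
Proof.
move=> t_gt0 /allP only /eqP ne.
rewrite /num_sarcs (eq_in_count (a2 := pred0)) ?count_pred0 //.
by case=> x y /only /orP[] /eqP -> /=; apply/negbTE/eqP; lia.
Qed.

Lemma num_tarcs_only s t v w t' :
  0 < s -> only_arcs s t v w -> t' != t -> num_tarcs t' v w = 0.
Proof.
move=> s_gt0 /allP only /eqP ne.
rewrite /num_tarcs (eq_in_count (a2 := pred0)) ?count_pred0 //.
by case=> x y /only /orP[] /eqP -> /=; apply/negbTE/eqP; lia.
Qed.

Lemma size_only_arcs s t v w : 0 < s -> only_arcs s t v w ->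
  size w = num_sarcs s v w + num_tarcs t v w.
Proof.
move=> s_gt0 only; rewrite /num_sarcs /num_tarcs -count_predUI.
rewrite (eq_in_count (a1 := predI _ _) (a2 := pred0)) ?count_pred0; last first.
  by case=> x y _ /=; apply/negbTE/negP => /andP[/eqP ? /eqP ?]; lia.
move: only; rewrite /only_arcs all_count size_zip /= (minn_idPr (leqnSn _)) => /eqP <-.
by rewrite addn0; apply: eq_count => -[].
Qed.

Section Walks.

Variables (n : nat) (S T : seq nat).

Local Notation walk := (path (Darc n S T)).

Lemma Darc_up x d : 1 <= x -> x + d <= n -> 0 < d -> d \in S -> Darc n S T x (x + d).
Proof.
move=> *; rewrite /Darc addKn.
by apply/and3P; split; [lia | lia | apply/orP; left; apply/andP; split; [lia|]].
Qed.

Lemma Darc_down x d : x <= n -> d < x -> 0 < d -> d \in T -> Darc n S T x (x - d).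
Proof.
move=> *; rewrite /Darc subKn; last by lia.
by apply/and3P; split; [lia | lia | apply/orP; right; apply/andP; split; [lia|]].
Qed.

Lemma last_walk_in_range v w : 1 <= v <= n -> walk v w -> 1 <= last v w <= n.
Proof.
elim: w v => [|x w IH] v //= _ /andP[vx xw]; apply: IH xw.
by case/and3P: vx.
Qed.

Lemma arc_displacement x y : uniq S -> uniq T -> Darc n S T x y ->
  y + \sum_(t <- T) (x == y + t) * t = x + \sum_(s <- S) (y == x + s) * s.
Proof.
move=> uS uT /and3P[_ _ /orP[] /andP[lt_xy d_in]].
- move: d_in; have [d -> d_gt0] : exists2 d, y = x + d & 0 < d by exists (y - x); lia.
  rewrite addKn => d_in; rewrite big1 => [|t _]; last first.
    by rewrite (_ : _ == _ = false) //; apply/negbTE/eqP; lia.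
  under eq_bigr do rewrite eqn_add2l.
  by rewrite sum_uniq_indicator // d_in; lia.
- move: d_in; have [d -> d_gt0] : exists2 d, x = y + d & 0 < d by exists (x - y); lia.
  rewrite addKn => d_in; rewrite [X in _ = _ + X]big1 => [|s _]; last first.
    by rewrite (_ : _ == _ = false) //; apply/negbTE/eqP; lia.
  under eq_bigr do rewrite eqn_add2l.
  by rewrite sum_uniq_indicator // d_in; lia.
Qed.

Lemma walk_displacement v w : uniq S -> uniq T -> walk v w ->
  last v w + \sum_(t <- T) num_tarcs t v w * t = v + \sum_(s <- S) num_sarcs s v w * s.
Proof.
move=> uS uT; elim: w v => [|x w IH] v /=; first by rewrite !big1.
case/andP=> /(arc_displacement uS uT) vx /IH xw.
under eq_bigr do rewrite num_tarcs_cons mulnDl.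
under [in RHS]eq_bigr do rewrite num_sarcs_cons mulnDl.
by rewrite !big_split /=; lia.
Qed.

Section TwoArcWalks.

Variables s t : nat.
Hypotheses (sS : s \in S) (tT : t \in T) (s_gt0 : 0 < s) (t_gt0 : 0 < t).
Hypothesis st_le : s + t <= n.

Lemma two_arc_walk p q x y : 1 <= x <= n -> 1 <= y <= n -> x + p * s = y + q * t ->
  exists w, [/\ walk x w, last x w = y, only_arcs s t x w,
                num_sarcs s x w = p & num_tarcs t x w = q].
Proof.
move=> + y_in; have [k] := ubnP (p + q); elim: k p q x => // k IH p q x pq_lt x_in e.
case: (posnP (p + q)) => [pq0 | pq_gt0].
  have [p0 q0] : p = 0 /\ q = 0 by lia.
  by exists [::]; split=> //=; move: e; rewrite p0 q0 !mul0n !addn0.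
case: (boolP ((0 < p) && (x + s <= n))) => [/andP[p_gt0 xs_le] | no_up].
  have [|||w [xw wl wo ws wt]] := IH p.-1 q (x + s); [lia | lia | |].
    by move: e; case: (p) p_gt0 => // p' _; rewrite mulSn; lia.
  exists (x + s :: w); split=> //=; rewrite ?wl //.
  - by rewrite Darc_up //; lia.
  - by rewrite only_arcs_cons wo eqxx.
  - by rewrite num_sarcs_cons eqxx ws; lia.
  - by rewrite num_tarcs_cons wt (_ : _ == _ = false) //; apply/negbTE/eqP; lia.
have [q_gt0 tx_lt] : 0 < q /\ t < x.
  by move: e no_up pq_gt0; case: (p) => [|p']; case: (q) => [|q']; rewrite ?mulSn; lia.
have [|||w [xw wl wo ws wt]] := IH p q.-1 (x - t); [lia | lia | |].
  by move: e; case: (q) q_gt0 => // q' _; rewrite mulSn; lia.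
exists (x - t :: w); split=> //=; rewrite ?wl //.
- by rewrite Darc_down //; lia.
- by rewrite only_arcs_cons wo subnK ?eqxx ?orbT //; lia.
- by rewrite num_sarcs_cons ws (_ : _ == _ = false) //; apply/negbTE/eqP; lia.
- by rewrite num_tarcs_cons wt subnK ?eqxx //; lia.
Qed.

Lemma sarc_block d x : d \in S -> 0 < d -> d + t <= n -> 1 <= x <= n ->
  exists w, [/\ walk x w, size w <= (ceildiv d t).+1,
                forall s', s' != s -> num_sarcs s' x w = (s' == d) &
                forall t', t' != t -> num_tarcs t' x w = 0].
Proof.
move=> dS d_gt0 dt_le x_in; have [q [q_le qt_lt room]] := descent_steps t_gt0 x_in dt_le.
have [||w [xw wl wo ws wt]] := @two_arc_walk 0 q x (x - q * t) x_in; [lia | lia |].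
exists (w ++ [:: x - q * t + d]); split.
- by rewrite cat_path xw wl /= andbT Darc_up //; lia.
- by rewrite size_cat (size_only_arcs s_gt0 wo) ws wt /=; lia.
- move=> s' ne; rewrite num_sarcs_cat (num_sarcs_only t_gt0 wo ne) wl.
  by rewrite num_sarcs_cons eqn_add2l eq_sym addn0.
- move=> t' ne; rewrite num_tarcs_cat (num_tarcs_only s_gt0 wo ne) wl num_tarcs_cons.
  by rewrite (_ : _ == _ = false) //; apply/negbTE/eqP; lia.
Qed.

Lemma tarc_block d x : d \in T -> 0 < d -> d + s <= n -> 1 <= x <= n ->
  exists w, [/\ walk x w, size w <= (ceildiv d s).+1,
                forall s', s' != s -> num_sarcs s' x w = 0 &
                forall t', t' != t -> num_tarcs t' x w = (t' == d)].
Proof.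
move=> dT d_gt0 ds_le x_in; have [p [p_le dx_lt room]] := ascent_steps s_gt0 x_in ds_le.
have [||w [xw wl wo ws wt]] := @two_arc_walk p 0 x (x + p * s) x_in; [lia | lia |].
exists (w ++ [:: x + p * s - d]); split.
- by rewrite cat_path xw wl /= andbT Darc_down.
- by rewrite size_cat (size_only_arcs s_gt0 wo) ws wt /=; lia.
- move=> s' ne; rewrite num_sarcs_cat (num_sarcs_only t_gt0 wo ne) wl num_sarcs_cons.
  by rewrite (_ : _ == _ = false) //; apply/negbTE/eqP; lia.
- move=> t' ne; rewrite num_tarcs_cat (num_tarcs_only s_gt0 wo ne) wl num_tarcs_cons.
  by rewrite addn0; apply/eqP/eqP; lia.
Qed.

End TwoArcWalks.

End Walks.

Section PrescribedArcs.

Variables (n : nat) (S T : seq nat).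
Hypotheses (uS : uniq S) (uT : uniq T) (S_gt0 : 0 < size S) (T_gt0 : 0 < size T).

Local Notation walk := (path (Darc n S T)).
Local Notation s1 := (nth 0 S 0).
Local Notation t1 := (nth 0 T 0).

Hypotheses (S_pos : {in S, forall s, 0 < s}) (T_pos : {in T, forall t, 0 < t}).
Hypotheses (S_room : {in S, forall s, s + t1 <= n}) (T_room : {in T, forall t, t + s1 <= n}).

Let s1S : s1 \in S := mem_nth 0 S_gt0.
Let t1T : t1 \in T := mem_nth 0 T_gt0.

Lemma first_arcs_fit : [/\ 0 < s1, 0 < t1 & s1 + t1 <= n].
Proof. by split; [apply: S_pos | apply: T_pos | apply: S_room]. Qed.

Lemma walk_with_first_arc_counts v w (a b : nat -> nat) A B :
  1 <= v <= n -> walk v w ->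
  (forall i, 1 <= i < size S -> num_sarcs (nth 0 S i) v w = a i) ->
  (forall j, 1 <= j < size T -> num_tarcs (nth 0 T j) v w = b j) ->
  num_sarcs s1 v w <= A -> num_tarcs t1 v w <= B ->
  B * t1 + \sum_(1 <= j < size T) b j * nth 0 T j
    < v + A * s1 + \sum_(1 <= i < size S) a i * nth 0 S i
    <= n + (B * t1 + \sum_(1 <= j < size T) b j * nth 0 T j) ->
  exists w', [/\ walk v w',
    forall i, 1 <= i < size S -> num_sarcs (nth 0 S i) v w' = a i,
    forall j, 1 <= j < size T -> num_tarcs (nth 0 T j) v w' = b j,
    num_sarcs s1 v w' = A & num_tarcs t1 v w' = B].
Proof.
move=> v_in vw wa wb a1_le b1_le target; have [s1_gt0 t1_gt0 s1t1_le] := first_arcs_fit.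
have := walk_displacement uS uT vw; rewrite (sum_seq_nth0 _ S_gt0) (sum_seq_nth0 _ T_gt0).
rewrite (eq_big_nat _ _ (fun i i_in => congr1 (muln^~ _) (wa i i_in))).
rewrite (eq_big_nat _ _ (fun i i_in => congr1 (muln^~ _) (wb i i_in))).
move: target; set X := \sum_(1 <= i < size S) _; set Y := \sum_(1 <= i < size T) _.
set a1 := num_sarcs s1 v w; set b1 := num_tarcs t1 v w; set e := last v w.
move=> target disp; pose y := v + A * s1 + X - (B * t1 + Y).
have y_in : 1 <= y <= n by rewrite /y; lia.
have e_in : 1 <= e <= n := last_walk_in_range v_in vw.
have a1_s1 : a1 * s1 <= A * s1 := leq_mul a1_le (leqnn s1).
have b1_t1 : b1 * t1 <= B * t1 := leq_mul b1_le (leqnn t1).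
have e_to_y : e + (A - a1) * s1 = y + (B - b1) * t1 by move: y_in; rewrite !mulnBl /y; lia.
have [w2 [ew2 _ w2_only w2s w2t]] :=
  two_arc_walk s1S t1T s1_gt0 t1_gt0 s1t1_le e_in y_in e_to_y.
exists (w ++ w2); split.
- by rewrite cat_path vw.
- move=> i i_in; rewrite num_sarcs_cat (num_sarcs_only t1_gt0 w2_only) ?nth_uniq_neq0 //.
  by rewrite addn0 wa.
- move=> i i_in; rewrite num_tarcs_cat (num_tarcs_only s1_gt0 w2_only) ?nth_uniq_neq0 //.
  by rewrite addn0 wb.
- by rewrite num_sarcs_cat w2s subnKC.
- by rewrite num_tarcs_cat w2t subnKC.
Qed.

Variable K : nat.
Hypotheses (S_steps : {in S, forall s, ceildiv s t1 <= K})
           (T_steps : {in T, forall t, ceildiv t s1 <= K}).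

Lemma append_sarc v w j : 1 <= v <= n -> walk v w -> 1 <= j < size S ->
  exists w2, [/\ walk v (w ++ w2), size w2 <= K.+1,
    forall i, 1 <= i < size S ->
      num_sarcs (nth 0 S i) v (w ++ w2) = num_sarcs (nth 0 S i) v w + (i == j) &
    forall i, 1 <= i < size T ->
      num_tarcs (nth 0 T i) v (w ++ w2) = num_tarcs (nth 0 T i) v w].
Proof.
move=> v_in vw j_in; have [s1_gt0 t1_gt0 s1t1_le] := first_arcs_fit.
have j_lt : j < size S by case/andP: j_in.
have dS : nth 0 S j \in S := mem_nth 0 j_lt.
have d_gt0 := S_pos dS; have d_room := S_room dS; have d_K := S_steps dS.
have [w2 [ew2 w2_size w2s w2t]] :=
  sarc_block s1S t1T s1_gt0 t1_gt0 s1t1_le dS d_gt0 d_room (last_walk_in_range v_in vw).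
exists w2; split.
- by rewrite cat_path vw.
- lia.
- move=> i i_in; have i_lt : i < size S by case/andP: i_in.
  by rewrite num_sarcs_cat w2s ?nth_uniq_neq0 // nth_uniq.
- by move=> i i_in; rewrite num_tarcs_cat w2t ?addn0 ?nth_uniq_neq0.
Qed.

Lemma append_tarc v w j : 1 <= v <= n -> walk v w -> 1 <= j < size T ->
  exists w2, [/\ walk v (w ++ w2), size w2 <= K.+1,
    forall i, 1 <= i < size S ->
      num_sarcs (nth 0 S i) v (w ++ w2) = num_sarcs (nth 0 S i) v w &
    forall i, 1 <= i < size T ->
      num_tarcs (nth 0 T i) v (w ++ w2) = num_tarcs (nth 0 T i) v w + (i == j)].
Proof.
move=> v_in vw j_in; have [s1_gt0 t1_gt0 s1t1_le] := first_arcs_fit.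
have j_lt : j < size T by case/andP: j_in.
have dT : nth 0 T j \in T := mem_nth 0 j_lt.
have d_gt0 := T_pos dT; have d_room := T_room dT; have d_K := T_steps dT.
have [w2 [ew2 w2_size w2s w2t]] :=
  tarc_block s1S t1T s1_gt0 t1_gt0 s1t1_le dT d_gt0 d_room (last_walk_in_range v_in vw).
exists w2; split.
- by rewrite cat_path vw.
- lia.
- by move=> i i_in; rewrite num_sarcs_cat w2s ?addn0 ?nth_uniq_neq0.
- move=> i i_in; have i_lt : i < size T by case/andP: i_in.
  by rewrite num_tarcs_cat w2t ?nth_uniq_neq0 // nth_uniq.
Qed.

Lemma walk_with_arc_counts v (a b : nat -> nat) : 1 <= v <= n ->
  exists w, [/\ walk v w,
    forall i, 1 <= i < size S -> num_sarcs (nth 0 S i) v w = a i,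
    forall j, 1 <= j < size T -> num_tarcs (nth 0 T j) v w = b j &
    size w <= (\sum_(1 <= i < size S) a i + \sum_(1 <= j < size T) b j) * K.+1].
Proof.
move=> v_in; have [N] := ubnP (\sum_(1 <= i < size S) a i + \sum_(1 <= j < size T) b j).
elim: N a b => // N IH a b sum_lt.
have decr_at (c : nat -> nat) j i : 0 < c j -> c i = c i - (i == j) + (i == j).
  by move=> cj; case: eqP => [->|]; lia.
case: (boolP (has (fun i => 0 < a i) (index_iota 1 (size S)))) => [/hasP[j]|/hasPn a0].
  rewrite mem_index_iota => j_in aj.
  have a_sum := big_nat_decr j_in aj.
  have [|w [vw wa wb w_size]] := IH (fun i => a i - (i == j)) b; first by lia.
  have [w2 [vw2 w2_size w2s w2t]] := append_sarc v_in vw j_in.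
  exists (w ++ w2); split=> //.
  - by move=> i i_in; rewrite w2s // wa // -decr_at.
  - by move=> i i_in; rewrite w2t // wb.
  - by rewrite size_cat a_sum; lia.
case: (boolP (has (fun j => 0 < b j) (index_iota 1 (size T)))) => [/hasP[j]|/hasPn b0].
  rewrite mem_index_iota => j_in bj.
  have b_sum := big_nat_decr j_in bj.
  have [|w [vw wa wb w_size]] := IH a (fun i => b i - (i == j)); first by lia.
  have [w2 [vw2 w2_size w2s w2t]] := append_tarc v_in vw j_in.
  exists (w ++ w2); split=> //.
  - by move=> i i_in; rewrite w2s // wa.
  - by move=> i i_in; rewrite w2t // wb // -decr_at.
  - by rewrite size_cat b_sum; lia.
exists [::]; split=> // i i_in; apply/esym/eqP; rewrite -leqn0 leqNgt.
- by apply: a0; rewrite mem_index_iota.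
- by apply: b0; rewrite mem_index_iota.
Qed.

End PrescribedArcs.

Theorem theorem3p3 (n : nat) (S T : seq nat) (v : nat) (a b : nat -> nat) :
  S != [::] -> T != [::] ->
  sorted ltn S -> sorted ltn T ->
  all (fun s => 1 <= s <= n.-1) S -> all (fun t => 1 <= t <= n.-1) T ->
  (* max S + min T <= n  and  min S + max T <= n *)
  nth 0 S (size S).-1 + nth 0 T 0 <= n ->
  nth 0 S 0 + nth 0 T (size T).-1 <= n ->
  1 <= v <= n ->
  (* a i (1 <= i < size S) is the prescribed number of s_(i+1)-arcs,
     b j (1 <= j < size T) is the prescribed number of t_(j+1)-arcs *)
  let good (w : seq nat) :=
    [/\ is_walk n S T v w,
        forall i, 1 <= i < size S -> num_sarcs (nth 0 S i) v w = a i &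
        forall j, 1 <= j < size T -> num_tarcs (nth 0 T j) v w = b j] in
  let bound :=
    ((\sum_(1 <= i < size S) a i) + (\sum_(1 <= j < size T) b j)) *
    (maxn (ceildiv (nth 0 T (size T).-1) (nth 0 S 0))
          (ceildiv (nth 0 S (size S).-1) (nth 0 T 0)) + 1) in
  (* (a) *)
  (exists w, good w /\ size w <= bound) /\
  (* (b) *)
  (forall w, good w -> size w <= bound ->
   forall A B : nat,
     num_sarcs (nth 0 S 0) v w <= A ->
     num_tarcs (nth 0 T 0) v w <= B ->
     (1 <= v%:Z + (A * nth 0 S 0)%:Z + (\sum_(1 <= i < size S) (a i * nth 0 S i)%:Z)
            - (B * nth 0 T 0)%:Z - (\sum_(1 <= j < size T) (b j * nth 0 T j)%:Z)
        <= n%:Z)%R ->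
     exists w', [/\ good w',
                    num_sarcs (nth 0 S 0) v w' = A &
                    num_tarcs (nth 0 T 0) v w' = B]).
Proof.
move=> S_neq0 T_neq0 sS sT S_range T_range smax_t1 s1_tmax v_in good.
set K := maxn _ _ => bound.
have uS := sorted_uniq ltn_trans ltnn sS; have uT := sorted_uniq ltn_trans ltnn sT.
have S_gt0 : 0 < size S by rewrite lt0n size_eq0.
have T_gt0 : 0 < size T by rewrite lt0n size_eq0.
have S_pos : {in S, forall s, 0 < s} by move=> s /(allP S_range) /andP[].
have T_pos : {in T, forall t, 0 < t} by move=> t /(allP T_range) /andP[].
have S_room := sorted_ltn_room sS smax_t1.
have T_room := sorted_ltn_room sT (leq_trans (eq_leq (addnC _ _)) s1_tmax).
have S_steps := sorted_ltn_ceildiv sS (leq_maxr _ _ : _ <= K).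
have T_steps := sorted_ltn_ceildiv sT (leq_maxl _ _ : _ <= K).
split.
  have [w [vw wa wb w_size]] :=
    walk_with_arc_counts uS uT S_gt0 T_gt0 S_pos T_pos S_room T_room S_steps T_steps a b v_in.
  by exists w; split; [split=> //; rewrite /is_walk v_in | rewrite /bound addn1].
move=> w [/andP[_ vw] wa wb] _ A B a1_le b1_le target.
have [|w' [vw' wa' wb' wA wB]] :=
  walk_with_first_arc_counts uS uT S_gt0 T_gt0 S_pos T_pos S_room v_in vw wa wb
    a1_le b1_le.
  move: target; rewrite -!(big_morph Posz PoszD (erefl (Posz 0))).
  (* The [set]s identify the [nth] terms of the ring-scoped hypothesis with those of
     the goal, which differ by a convertible type argument and would confuse [lia]. *)
  set s1 := nth 0 S 0; set t1 := nth 0 T 0.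
  by set X := \sum_(1 <= i < size S) _; set Y := \sum_(1 <= j < size T) _; lia.
by exists w'; split=> //; split=> //; rewrite /is_walk v_in.
Qed.
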